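(* Let $D\ge2$ and $2\le m\le D$ be integers. Let $P\in\mathbb{C}[x]$ have the form $P(x)=ax^D+bx^{D-m}+(\text{terms of degree}<D-m)$ with $ab\neq0$ (so the coefficients of $x^{D-1},\dots,x^{D-m+1}$ vanish). Then for every positive integer $n$, the iterate $P^n$ has the form $\alpha x^{D^n}+\beta x^{D^n-m}+(\text{terms of degree}<D^n-m)$ with $\alpha\beta\neq0$.
   Context: $P^n$ denotes the $n$-th compositional iterate of $P$. *)

From HB Require Import structures.
From mathcomp Require Import all_boot all_order all_algebra.
From mathcomp Require Import reals.
From mathcomp Require Export complex.
Set Implicit Arguments. Unset Strict Implicit. Unset Printing Implicit Defensive.
Import Order.TTheory GRing.Theory Num.Theory.
Local Open Scope ring_scope.

Definition poly_iter (K : nzRingType) (P : {poly K}) (n : nat) : {poly K} :=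
  iter n (fun q => P \Po q) 'X.

From HB Require Import structures.
From mathcomp Require Import all_boot all_order all_algebra.
From mathcomp Require Import reals complex.
From mathcomp Require Import ring zify.
Set Implicit Arguments. Unset Strict Implicit. Unset Printing Implicit Defensive.
Import GRing.Theory Num.Theory.
Local Open Scope ring_scope.

(* Say that Q has top terms (a, b) in degrees (d, d - m) when
   Q = a X^d + b X^(d-m) + (terms of degree < d - m).  This shape is stable
   under products: the cross term b c' X^(d+e-2m) is already below the
   second top degree, so the product has top terms (a c, a c' + b c) in
   degrees (d + e, d + e - m).  Hence Q^D has top terms
   (a^D, D a^(D-1) b), and in P o Q = sum_i p_i Q^i every power Q^i with
   i <= D - m has degree at most (D - m) d < D d - m as soon as d >= 2.
   So P o Q has top terms (p a^D, D p a^(D-1) b), both nonzero in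
   characteristic zero, and induction on n concludes. *)

Section TopTerms.
Variable K : comNzRingType.
Implicit Types (a b c p : K) (P Q S : {poly K}).

Definition top_terms (d m : nat) a b Q :=
  (size (Q - (a *: 'X^d + b *: 'X^(d - m)))%R <= d - m)%N.

Lemma size_polyM_leq_add P Q i j :
  (size P <= i)%N -> (size Q <= j.+1)%N -> (size (P * Q)%R <= i + j)%N.
Proof. by move=> hP hQ; apply: leq_trans (size_polyMleq P Q) _; lia. Qed.

Lemma size_top_poly d m a b : (size (a *: 'X^d + b *: 'X^(d - m))%R <= d.+1)%N.
Proof.
apply: leq_trans (size_polyD _ _) _; rewrite geq_max.
by rewrite !(leq_trans (size_scale_leq _ _)) // size_polyXn // ltnS leq_subr.
Qed.

Lemma size_top_terms d m a b Q : top_terms d m a b Q -> (size Q <= d.+1)%N.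
Proof.
move=> hQ; rewrite -[Q](subrK (a *: 'X^d + b *: 'X^(d - m))).
apply: leq_trans (size_polyD _ _) _.
by rewrite geq_max size_top_poly andbT (leq_trans hQ (leqW (leq_subr m d))).
Qed.

Lemma top_termsD_low d m a b Q S :
  top_terms d m a b Q -> (size S <= d - m)%N -> top_terms d m a b (Q + S).
Proof.
move=> hQ hS; rewrite /top_terms addrAC.
by apply: leq_trans (size_polyD _ _) _; rewrite geq_max hS andbT.
Qed.

Lemma top_termsZ d m a b c Q :
  top_terms d m a b Q -> top_terms d m (c * a) (c * b) (c *: Q).
Proof.
move=> hQ; rewrite /top_terms -!scalerA -scalerDr -scalerBr.
exact: leq_trans (size_scale_leq _ _) hQ.
Qed.

Lemma top_termsM d e m a b c c' Q S : (0 < m)%N -> (m <= d)%N -> (m <= e)%N ->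
  top_terms d m a b Q -> top_terms e m c c' S ->
  top_terms (d + e) m (a * c) (a * c' + b * c) (Q * S).
Proof.
move=> m_gt0 le_md le_me hQ hS.
rewrite /top_terms.
set A := a *: 'X^d + b *: 'X^(d - m); set B := c *: 'X^e + c' *: 'X^(e - m).
have -> : Q * S - ((a * c) *: 'X^(d + e) + (a * c' + b * c) *: 'X^(d + e - m))
    = (b * c') *: 'X^(d - m + (e - m)) + (A * (S - B) + (Q - A) * S).
  have eXd : 'X^d = 'X^(d - m) * 'X^m :> {poly K} by rewrite -exprD subnK.
  have eXe : 'X^e = 'X^(e - m) * 'X^m :> {poly K} by rewrite -exprD subnK.
  have eXde : 'X^(d + e) = 'X^(d - m) * 'X^(e - m) * 'X^m * 'X^m :> {poly K}.
    by rewrite -!exprD; congr (_ ^+ _); lia.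
  have eXdem : 'X^(d + e - m) = 'X^(d - m) * 'X^(e - m) * 'X^m :> {poly K}.
    by rewrite -!exprD; congr (_ ^+ _); lia.
  rewrite /A /B eXd eXe eXde eXdem exprD -!mul_polyC !rmorphD !rmorphM /=.
  by ring.
have size_low : (size ((b * c') *: 'X^(d - m + (e - m)) : {poly K}) <= d + e - m)%N.
  by rewrite (leq_trans (size_scale_leq _ _)) // size_polyXn; lia.
apply: leq_trans (size_polyD _ _) _; rewrite geq_max size_low /=.
apply: leq_trans (size_polyD _ _) _; rewrite geq_max; apply/andP; split.
  rewrite mulrC; apply: leq_trans (size_polyM_leq_add hS (size_top_poly d m a b)) _; lia.
apply: leq_trans (size_polyM_leq_add hQ (size_top_terms hS)) _; lia.
Qed.

Lemma top_termsX d m a b Q k : (0 < m)%N -> (m <= d)%N ->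
  top_terms d m a b Q ->
  top_terms (k.+1 * d) m (a ^+ k.+1) (a ^+ k * b *+ k.+1) (Q ^+ k.+1).
Proof.
move=> m_gt0 le_md hQ; elim: k => [|k IHk]; first by rewrite mul1n expr0 mul1r.
have -> : a ^+ k.+1 * b *+ k.+2 = a ^+ k.+1 * b + (a ^+ k * b *+ k.+1) * a.
  by rewrite exprS; ring.
rewrite [Q ^+ _]exprSr [a ^+ _]exprSr mulSnr; apply: top_termsM => //.
exact: leq_trans le_md (leq_pmull _ _).
Qed.

Lemma top_terms_comp D d m p p' a b P Q :
  (0 < m)%N -> (m <= D)%N -> (1 < d)%N -> (m <= d)%N ->
  top_terms D m p p' P -> top_terms d m a b Q ->
  top_terms (D * d) m (p * a ^+ D) (p * (a ^+ D.-1 * b *+ D)) (P \Po Q).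
Proof.
move=> m_gt0 le_mD d_gt1 le_md hP hQ.
have D_gt0 : (0 < D)%N by lia.
have [L size_L ->] : exists2 L : {poly K}, (size L <= D - m)%N &
    P = p *: 'X^D + p' *: 'X^(D - m) + L.
  by exists (P - (p *: 'X^D + p' *: 'X^(D - m))); rewrite // addrC subrK.
rewrite !comp_polyD !comp_polyZ !comp_Xn_poly -addrA.
apply: top_termsD_low.
  by have := top_termsX D.-1 m_gt0 le_md hQ; rewrite prednK // => /top_termsZ.
have size_Q := size_top_terms hQ.
apply: leq_trans (size_polyD _ _) _; rewrite geq_max; apply/andP; split.
  apply: leq_trans (size_scale_leq _ _) _; apply: leq_trans (size_poly_exp_leq _ _) _.
  nia.
apply: leq_trans (size_comp_poly_leq _ _) _; nia.
Qed.

Lemma coef_top_terms d m a b Q j : top_terms d m a b Q -> (d - m <= j)%N ->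
  Q`_j = a *+ (j == d) + b *+ (j == d - m)%N.
Proof.
move=> /leq_sizeP hQ /hQ /eqP; rewrite coefB subr_eq0 => /eqP ->.
by rewrite coefD !coefZ !coefXn !mulr_natr.
Qed.

Definition gap_form (m d : nat) Q :=
  [/\ size Q = d.+1, Q`_d * Q`_(d - m) != 0 &
      forall i, (d - m < i < d)%N -> Q`_i = 0].

Lemma gap_form_top_terms d m Q : (0 < m)%N -> (m <= d)%N ->
  gap_form m d Q -> top_terms d m Q`_d Q`_(d - m) Q.
Proof.
move=> m_gt0 le_md [size_Q _ gap_Q]; apply/leq_sizeP => j le_j.
rewrite coefB coefD !coefZ !coefXn !mulr_natr.
have lt_dm_d : (d - m < d)%N by lia.
have [lt_jd | lt_dj | ->] := ltngtP j d.
- have [->|ne_j] := eqVneq j (d - m)%N; first by rewrite mulr0n mulr1n add0r subrr.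
  have lt_dm_j : (d - m < j)%N by rewrite ltn_neqAle eq_sym ne_j.
  by rewrite (gap_Q j) ?lt_dm_j // !mulr0n addr0 subr0.
- rewrite nth_default ?size_Q // gtn_eqF; last exact: ltn_trans lt_dm_d lt_dj.
  by rewrite mulr0n addr0 subr0.
- by rewrite gtn_eqF // mulr0n mulr1n addr0 subrr.
Qed.

Lemma top_terms_gap_form d m a b Q : (0 < m)%N -> (m <= d)%N -> a * b != 0 ->
  top_terms d m a b Q -> gap_form m d Q.
Proof.
move=> m_gt0 le_md ab_neq0 hQ.
have lt_dm_d : (d - m < d)%N by lia.
have Q_d : Q`_d = a.
  by rewrite (coef_top_terms hQ) ?leq_subr // eqxx (gtn_eqF lt_dm_d) mulr0n addr0.
have Q_dm : Q`_(d - m) = b.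
  by rewrite (coef_top_terms hQ) // (ltn_eqF lt_dm_d) eqxx add0r.
have a_neq0 : a != 0 by apply: contraNneq ab_neq0 => ->; rewrite mul0r.
split; last 2 first.
- by rewrite Q_d Q_dm.
- move=> i /andP[lt_dm_i lt_id].
  by rewrite (coef_top_terms hQ (ltnW lt_dm_i)) (ltn_eqF lt_id) (gtn_eqF lt_dm_i) !mulr0n addr0.
apply/eqP; rewrite eqn_leq (size_top_terms hQ) ltnNge /=.
by apply: contra a_neq0 => /leq_sizeP/(_ d (leqnn d)) <-; rewrite Q_d.
Qed.
End TopTerms.

Section GapFormIter.
Variable K : idomainType.
Implicit Types P Q : {poly K}.

Lemma gap_form_comp D d m P Q : D%:R != 0 :> K ->
  (0 < m)%N -> (m <= D)%N -> (1 < d)%N -> (m <= d)%N ->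
  gap_form m D P -> gap_form m d Q -> gap_form m (D * d) (P \Po Q).
Proof.
move=> D_neq0 m_gt0 le_mD d_gt1 le_md gap_P gap_Q.
have top_PQ := top_terms_comp m_gt0 le_mD d_gt1 le_md
  (gap_form_top_terms m_gt0 le_mD gap_P) (gap_form_top_terms m_gt0 le_md gap_Q).
apply: top_terms_gap_form top_PQ => //; first by nia.
case: gap_P gap_Q => _ + _ [_ + _]; rewrite !mulf_eq0 !negb_or => /andP[P_D _] /andP[Q_d Q_dm].
by rewrite -mulr_natr !mulf_eq0 !expf_eq0 (negbTE P_D) (negbTE Q_d) (negbTE Q_dm) (negbTE D_neq0) !andbF.
Qed.

Lemma gap_form_iter D m P : D%:R != 0 :> K ->
  (1 < D)%N -> (0 < m)%N -> (m <= D)%N -> gap_form m D P ->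
  forall n, (0 < n)%N -> gap_form m (D ^ n) (poly_iter P n).
Proof.
move=> D_neq0 D_gt1 m_gt0 le_mD gap_P.
elim=> [//|[|n] IHn] _; first by rewrite /poly_iter /= comp_polyXr expn1.
have le_D_Dn : (D <= D ^ n.+1)%N by rewrite expnS leq_pmulr // expn_gt0 ltnW.
rewrite expnS; apply: gap_form_comp => //; [exact: leq_trans D_gt1 le_D_Dn |
  exact: leq_trans le_D_Dn | exact: IHn].
Qed.
End GapFormIter.

Theorem lemma7p2 (R : realType) (D m : nat) (P : {poly R[i]}) :
  (2 <= D)%N -> (2 <= m)%N -> (m <= D)%N ->
  size P = D.+1 ->
  P`_D * P`_(D - m) != 0 ->
  (forall i : nat, (D - m < i < D)%N -> P`_i = 0) ->
  forall n : nat, (0 < n)%N ->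
    let Q := poly_iter P n in
    [/\ size Q = (D ^ n).+1,
        Q`_(D ^ n) * Q`_(D ^ n - m) != 0 &
        forall i : nat, (D ^ n - m < i < D ^ n)%N -> Q`_i = 0].
Proof.
move=> D_gt1 m_gt1 le_mD size_P top_P gap_P n n_gt0.
have D_neq0 : D%:R != 0 :> R[i] by rewrite pnatr_eq0 -lt0n ltnW.
exact: gap_form_iter D_neq0 D_gt1 (ltnW m_gt1) le_mD (And3 size_P top_P gap_P) n n_gt0.
Qed.
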